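(* Let $G=(V,A)$ be a finite simple graph without loops with $|e|\ge 2$ for all $e\in V$, and $\mathfrak n=\mathfrak n(G)=W\oplus\mathfrak z$. Then $(\Lambda^2\mathfrak n)^{\mathfrak n}=\Lambda^2\mathfrak z$ and $\mathfrak n$ is of TST type. Consequently every Lie bialgebra cobracket $\delta$ on $\mathfrak n$ satisfies $\delta(\mathfrak z)\subseteq\Lambda^2\mathfrak z$ and $\delta(W)\subseteq (W\wedge\mathfrak z)\oplus\Lambda^2\mathfrak z$; more precisely $\delta(z)=\delta_{\mathfrak z}(z)$ and $\delta(v)=\sum_{\alpha\in A}D^\alpha(v)\wedge\alpha+\varphi(v)$ with linear maps $\delta_{\mathfrak z}:\mathfrak z\to\Lambda^2\mathfrak z$, $D^\alpha:W\to W$, $\varphi:W\to\Lambda^2\mathfrak z$ satisfying: $\delta_{\mathfrak z}$ satisfies co-Jacobi; writing $\delta_{\mathfrak z}(\gamma)=\sum_{\alpha<\beta}c_\gamma^{\alpha\beta}\alpha\wedge\beta$, $[D^\alpha,D^\beta]=\sum_\gamma c_\gamma^{\alpha\beta}D^\gamma$; $\sum_\gamma T_\gamma(x)(y)\delta_{\mathfrak z}(\gamma)=\sum_{\gamma,\eta}(T_\gamma(D^\eta x)(y)+T_\gamma(x)(D^\eta y))\gamma\wedge\eta$ for $x,y\in W$; and, writing $\varphi(v)=\sum_{\alpha<\beta}\varphi_{\alpha\beta}(v)\alpha\wedge\beta$, $\sum_\gamma\varphi(D^\gamma v)\wedge\gamma+\sum_{\alpha<\beta}\varphi_{\alpha\beta}(v)(\delta_{\mathfrak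 z}(\alpha)\wedge\beta-\alpha\wedge\delta_{\mathfrak z}(\beta))=0$ for $v\in W$.
   Context: $V=\{e_1,\dots,e_n\}$ ordered, each edge joining $e_i,e_j$ ($i<j$) oriented from $e_i$ to $e_j$, edges $A$ given a fixed total order. $\mathfrak n(G)$ over a field of characteristic zero has basis $V\cup A$, $[e_i,e_j]=\alpha$ if $\alpha$ goes from $e_i$ to $e_j$, $[e_i,e_j]=0$ if not adjacent, edges central; $W=\mathrm{span}(V)$, center $\mathfrak z=\mathrm{span}(A)$. $T_\gamma:W\to W^*$ is defined by $[v,w]=\sum_\gamma T_\gamma(v)(w)\gamma$. $\mathfrak n$ is of TST type if the only linear $S:W^*\to W$ with $T_\alpha ST_\beta+T_\beta ST_\alpha=0$ for all $\alpha,\beta\in A$ is $S=0$. Invariants are for $\mathrm{ad}_x(a\wedge b)=[x,a]\wedge b+a\wedge[x,b]$. A Lie bialgebra cobracket is a linear $\delta:\mathfrak n\to\Lambda^2\mathfrak n$ satisfying co-Jacobi ($\delta(x_1)\wedge x_2-x_1\wedge\delta(x_2)=0$, Sweedler $\delta(x)=x_1\wedge x_2$) and $\delta[x,y]=[\delta x,y]+[x,\delta y]$. *)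

From HB Require Import structures.
From mathcomp Require Import all_boot all_order all_algebra.
Set Implicit Arguments. Unset Strict Implicit. Unset Printing Implicit Defensive.
Import Order.TTheory GRing.Theory Num.Theory.
Local Open Scope ring_scope.

(* Lambda^2 is modelled by antisymmetric 2-tensors: a /\ b := a(x)b - b(x)a.
   Lambda^3 is modelled by alternating 3-tensors (full antisymmetrisation).   *)
Section Generic.
Variables (F : fieldType) (I : finType).

Definition vec := {ffun I -> F^o}.
Definition ten2 := {ffun I * I -> F^o}.
Definition ten3 := {ffun I * I * I -> F^o}.

Definition ev (p : I) : vec := [ffun r => (r == p)%:R].

Definition antisym2 (X : ten2) := forall p q, X (p, q) = - X (q, p).

Definition wedge (a b : vec) : ten2 := [ffun pq => a pq.1 * b pq.2 - a pq.2 * b pq.1].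

Definition wedge21 (X : ten2) (c : vec) : ten3 :=
  [ffun pqr => let: (p, q, r) := pqr in
     X (p, q) * c r + X (q, r) * c p + X (r, p) * c q].
Definition wedge12 (c : vec) (X : ten2) : ten3 :=
  [ffun pqr => let: (p, q, r) := pqr in
     c p * X (q, r) + c q * X (r, p) + c r * X (p, q)].

Definition bord (p q : I) : bool := (enum_rank p < enum_rank q)%N.

(* the linear map Lambda^2 -> Lambda^3,  x1 /\ x2 |-> f(x1) /\ x2 - x1 /\ f(x2),
   applied to X = sum_{p<q} X(p,q) e_p /\ e_q *)
Definition cojac (f : vec -> ten2) (X : ten2) : ten3 :=
  \sum_(p : I) \sum_(q : I | bord p q)
     X (p, q) *: (wedge21 (f (ev p)) (ev q) - wedge12 (ev p) (f (ev q))).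

Definition coJacobi (f : vec -> ten2) := forall x, cojac f (f x) = 0.

(* adjoint action of x on Lambda^2:  ad_x(a/\b) = [x,a]/\b + a/\[x,b] *)
Definition ad2 (br : vec -> vec -> vec) (x : vec) (X : ten2) : ten2 :=
  [ffun pq => \sum_(r : I) (br x (ev r) pq.1 * X (r, pq.2)
                           + br x (ev r) pq.2 * X (pq.1, r))].

Definition is_cobracket (br : vec -> vec -> vec) (delta : vec -> ten2) :=
  [/\ linear delta, (forall x, antisym2 (delta x)), coJacobi delta &
      forall x y, delta (br x y) = ad2 br x (delta y) - ad2 br y (delta x)].

End Generic.

(* Graph on vertex set 'I_n given by a relation g (assumed symmetric, irreflexive).
   Edges: pairs (i,j) with i<j adjacent, oriented from e_i to e_j. *)
Section Graph.
Variables (F : fieldType) (n : nat) (g : rel 'I_n).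

Definition edge : predArgType := {p : 'I_n * 'I_n | ((p.1 < p.2)%N && g p.1 p.2)}.
HB.instance Definition _ := Finite.copy edge {p : 'I_n * 'I_n | ((p.1 < p.2)%N && g p.1 p.2)}.

Definition basis : predArgType := ('I_n + edge)%type.
HB.instance Definition _ := Finite.copy basis ('I_n + edge)%type.

Definition Wv := vec F 'I_n.
Definition Zv := vec F edge.
Definition Nv := vec F basis.

Definition inW (w : Wv) : Nv := [ffun b => if b is inl i then w i else 0].
Definition inZ (z : Zv) : Nv := [ffun b => if b is inr a then z a else 0].
Definition inZ2 (Y : ten2 F edge) : ten2 F basis :=
  [ffun pq => match pq with (inr a, inr b) => Y (a, b) | _ => 0 end].

(* Lie bracket of n(G): [e_i,e_j] = alpha for alpha : e_i -> e_j, edges central *)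
Definition brN (x y : Nv) : Nv :=
  [ffun b => if b is inr a then
       x (inl (val a).1) * y (inl (val a).2) - x (inl (val a).2) * y (inl (val a).1)
     else 0].

(* restriction W x W -> z;  T_gamma(v)(w) = brW v w gamma *)
Definition brW (v w : Wv) : Zv :=
  [ffun a => v (val a).1 * w (val a).2 - v (val a).2 * w (val a).1].

Definition Tmx (gam : edge) : 'M[F]_n := \matrix_(i, j) brW (ev F i) (ev F j) gam.

Definition TST_type :=
  forall S : 'M[F]_n,
    (forall a b : edge, Tmx a *m S *m Tmx b + Tmx b *m S *m Tmx a = 0) -> S = 0.

End Graph.

Definition isE (n : nat) (g : rel 'I_n) (p : basis g) : bool :=
  if p is inr _ then true else false.

From HB Require Import structures.
From mathcomp Require Import all_boot all_order all_algebra ring.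
Import GRing.Theory.
Local Open Scope ring_scope.
Set Implicit Arguments. Unset Strict Implicit. Unset Printing Implicit Defensive.

(* Every vertex has degree at least 2, so for any vertex [i] and any vertex [q]
   there is a neighbour [k <> q] of [i], and the edge joining [i] and [k] is the
   only coordinate of [[e_k, e_i]].  Applying [ad e_k] to an invariant [X] thus
   isolates its components [X (e_i, _)], which must vanish, except when [i] and an
   edge [b] close a triangle; there the relations coming from the three vertices
   give [2 X (e_i, b) = 0], and characteristic zero is used.  The same choice of
   neighbours [p'] of [p] and [q'] of [q] makes the [(p', q')] entry of
   [T_a S T_b + T_b S T_a] equal to [+- S p q], which is the TST property.
   For a cobracket [delta], the cocycle identity with a central argument makes
   [delta z] invariant, hence in [Lambda^2 z], and with two generators [e_k, e_l]
   it kills the [W /\ W] part of [delta e_l].  The maps [delta_z], [D^a] and [phi]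
   are coordinates of [delta], and the four identities are coordinates of the
   co-Jacobi identity on [z] and on [W], and of the cocycle identity on [[W, W]]. *)

Section Multilinear.
Variable F : fieldType.

Definition linearOf (U V : lmodType F) (f : U -> V) (fL : linear f) : {linear U -> V} :=
  HB.pack f (GRing.isLinear.Build _ _ _ _ f fL).

Lemma sum_kronecker_mull (T : finType) (c : T) (f : T -> F) :
  \sum_r (c == r)%:R * f r = f c.
Proof.
rewrite (bigD1 c) //= eqxx mul1r big1 ?addr0 // => r /negbTE.
by rewrite eq_sym => ->; rewrite mul0r.
Qed.

Lemma sum_kronecker_mulr (T : finType) (c : T) (f : T -> F) :
  \sum_r f r * (c == r)%:R = f c.
Proof. by rewrite -[RHS]sum_kronecker_mull; apply: eq_bigr => r _; rewrite mulrC. Qed.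

Lemma evE (I : finType) (p r : I) : ev F p r = (r == p)%:R.
Proof. by rewrite ffunE. Qed.

Lemma ffunZE (I : finType) (a : F) (f : {ffun I -> F^o}) i : (a *: f) i = a * f i.
Proof. by rewrite ffunE. Qed.
Lemma ffunBE (I : finType) (f h : {ffun I -> F^o}) i : (f - h) i = f i - h i.
Proof. by rewrite !ffunE. Qed.
Lemma ffunDE (I : finType) (f h : {ffun I -> F^o}) i : (f + h) i = f i + h i.
Proof. by rewrite !ffunE. Qed.
Lemma ffun0E (I : finType) i : (0 : {ffun I -> F^o}) i = 0.
Proof. by rewrite !ffunE. Qed.

Lemma vec_sum_ev (I : finType) (x : vec F I) : x = \sum_p x p *: ev F p.
Proof.
apply/ffunP => r; rewrite sum_ffunE (bigD1 r) //= big1 ?addr0.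
  by rewrite !ffunE eqxx [_ *: _]mulr1.
by move=> p /negbTE Hp; rewrite !ffunE eq_sym Hp [_ *: _]mulr0.
Qed.

Lemma linear_vecE (I : finType) (V : lmodType F) (f : vec F I -> V) (x : vec F I) :
  linear f -> f x = \sum_p x p *: f (ev F p).
Proof.
move=> fL; rewrite -[f]/(linearOf fL : vec F I -> V) {1}(vec_sum_ev x) linear_sum.
by apply: eq_bigr => p _; rewrite linearZ.
Qed.

Lemma linear_coordE (I J : finType) (f : vec F I -> {ffun J -> F^o}) x p :
  linear f -> f x p = \sum_i x i * f (ev F i) p.
Proof.
by move=> fL; rewrite (linear_vecE _ fL) sum_ffunE; apply: eq_bigr => i _; rewrite ffunZE.
Qed.

Lemma eqrN_pchar0 (charF0 : [pchar F] =i pred0) (x : F) : x = - x -> x = 0.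
Proof.
move=> xN; have : x *+ 2 = 0 by rewrite mulr2n {1}xN addNr.
rewrite -mulr_natr => /eqP; rewrite mulf_eq0 => /orP [/eqP //|].
by move/pcharf0P: charF0 => ->.
Qed.

Lemma wedge21E (I : finType) (Y : ten2 F I) (c : vec F I) x y z :
  wedge21 Y c (x, y, z) = Y (x, y) * c z + Y (y, z) * c x + Y (z, x) * c y.
Proof. by rewrite ffunE. Qed.

Lemma wedge12E (I : finType) (c : vec F I) (Y : ten2 F I) : wedge12 c Y = wedge21 Y c.
Proof. by apply/ffunP => [[[x y] z]]; rewrite !ffunE /=; ring. Qed.

Lemma sum_bord_sym (I : finType) (u : I -> I -> F) : (forall p, u p p = 0) ->
  \sum_p \sum_(q | bord p q) (u p q + u q p) = \sum_p \sum_q u p q.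
Proof.
move=> u0.
have bordC (p q : I) : p != q -> ~~ bord p q = bord q p.
  move=> pq; rewrite /bord -leqNgt leq_eqVlt.
  suff -> : (enum_rank q == enum_rank p :> nat) = false by [].
  by apply/negbTE; apply: contra pq => /eqP/val_inj/enum_rank_inj ->.
symmetry.
transitivity (\sum_p \sum_q
    ((if bord p q then u p q else 0) + (if bord q p then u p q else 0))).
  apply: eq_bigr => p _; apply: eq_bigr => q _.
  have [->|pq] := eqVneq p q; first by rewrite /bord ltnn u0 addr0.
  by move: (bordC p q pq); case: (bord p q); case: (bord q p) => //= _;
    rewrite ?addr0 ?add0r.
under eq_bigr => p _ do rewrite big_split; rewrite big_split /=.
rewrite [X in _ + X]exchange_big /=.
symmetry; under eq_bigr => p _ do rewrite big_split; rewrite big_split /=.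
by congr (_ + _); apply: eq_bigr => p _; rewrite big_mkcond.
Qed.

(* Antisymmetry of [X] turns the sum over pairs [p < q] into one over all pairs. *)
Lemma cojacE (charF0 : [pchar F] =i pred0) (I : finType) (f : vec F I -> ten2 F I)
    (X : ten2 F I) : antisym2 X -> forall x y z,
  cojac f X (x, y, z) = \sum_p (X (p, x) * f (ev F p) (y, z)
     + X (p, y) * f (ev F p) (z, x) + X (p, z) * f (ev F p) (x, y)).
Proof.
move=> XA x y z.
have X0 p : X (p, p) = 0 by exact: (eqrN_pchar0 charF0 (XA p p)).
pose t p q := X (p, q) * wedge21 (f (ev F p)) (ev F q) (x, y, z).
transitivity (\sum_p \sum_(q | bord p q) (t p q + t q p)).
  rewrite /cojac sum_ffunE; apply: eq_bigr => p _; rewrite sum_ffunE.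
  by apply: eq_bigr => q _; rewrite ffunZE ffunBE wedge12E /t (XA q p); ring.
rewrite sum_bord_sym; last by move=> p; rewrite /t X0 mul0r.
apply: eq_bigr => p _.
transitivity (\sum_q (f (ev F p) (x, y) * ((z == q)%:R * X (p, q))
   + f (ev F p) (y, z) * ((x == q)%:R * X (p, q))
   + f (ev F p) (z, x) * ((y == q)%:R * X (p, q)))).
  by apply: eq_bigr => q _; rewrite /t wedge21E !evE; ring.
by rewrite !big_split /= -!mulr_sumr !sum_kronecker_mull; ring.
Qed.

Lemma sum_wedge_evE (I : finType) (K : I -> I -> F) a b :
  \sum_c \sum_e (K c e *: wedge (ev F c) (ev F e)) (a, b) = K a b - K b a.
Proof.
transitivity (\sum_c ((a == c)%:R * K c b - (b == c)%:R * K c a)).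
  apply: eq_bigr => c _.
  transitivity (\sum_e ((a == c)%:R * ((b == e)%:R * K c e)
                      - (b == c)%:R * ((a == e)%:R * K c e))).
    by apply: eq_bigr => e _; rewrite ffunZE ffunE !evE /=; ring.
  by rewrite sumrB -!mulr_sumr !sum_kronecker_mull.
by rewrite sumrB !sum_kronecker_mull.
Qed.

End Multilinear.

Section Graph.
Variables (F : fieldType) (n : nat) (g : rel 'I_n).
Hypothesis charF0 : [pchar F] =i pred0.
Hypothesis g_sym : symmetric g.
Hypothesis g_irr : irreflexive g.
Hypothesis g_deg : forall i : 'I_n, (2 <= #|[set j | g i j]|)%N.

(* The coordinate along the edge [a] of the bracket [e_k, sum_m h m e_m]. *)
Definition brcoef (a : edge g) (k : 'I_n) (h : 'I_n -> F) : F :=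
  ((val a).1 == k)%:R * h (val a).2 - ((val a).2 == k)%:R * h (val a).1.

Lemma eq_brcoef a k h h' : h =1 h' -> brcoef a k h = brcoef a k h'.
Proof. by move=> hh'; rewrite /brcoef !hh'. Qed.

Lemma edge_lt (a : edge g) : ((val a).1 < (val a).2)%N.
Proof. by case/andP: (valP a). Qed.

Lemma edge_neq (a : edge g) : ((val a).1 == (val a).2) = false.
Proof. by rewrite -val_eqE ltn_eqF ?edge_lt. Qed.

Lemma brcoef_fst a h : brcoef a (val a).1 h = h (val a).2.
Proof. by rewrite /brcoef eqxx eq_sym edge_neq mul1r mul0r subr0. Qed.

Lemma brcoef_snd a h : brcoef a (val a).2 h = - h (val a).1.
Proof. by rewrite /brcoef eqxx edge_neq mul1r mul0r sub0r. Qed.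

Lemma brcoef0 a k h : k != (val a).1 -> k != (val a).2 -> brcoef a k h = 0.
Proof.
by move=> k1 k2; rewrite /brcoef eq_sym (negbTE k1) eq_sym (negbTE k2) !mul0r subrr.
Qed.

Lemma exists_edge (u v : 'I_n) : (u < v)%N -> g u v -> exists a : edge g, val a = (u, v).
Proof. by move=> uv guv; exists (exist _ (u, v) (introT andP (conj uv guv))). Qed.

Lemma neighbor_neq i q : exists2 k, g i k & k != q.
Proof.
have [/existsP [k /andP [gik kq]]|/existsPn noK] := boolP [exists k, g i k && (k != q)].
  by exists k.
have sub1 : [set j | g i j] \subset [set q].
  by apply/subsetP => k; rewrite !inE => gik; have := noK k; rewrite gik negbK.
by have := leq_trans (g_deg i) (subset_leq_card sub1); rewrite cards1.
Qed.

Lemma neighbor_neq2 i q1 q2 :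
  (exists2 k, g i k & (k != q1) && (k != q2)) \/ (g i q1 /\ g i q2).
Proof.
have [/existsP [k /andP [gik kq]]|/existsPn noK] :=
   boolP [exists k, g i k && ((k != q1) && (k != q2))].
  by left; exists k.
right.
have sub2 : [set j | g i j] \subset [set q1; q2].
  by apply/subsetP => k; rewrite !inE => gik; have := noK k; rewrite gik /= negb_and !negbK.
have card2 : (#|[set q1; q2]| <= #|[set j | g i j]|)%N.
  by apply: leq_trans (g_deg i); rewrite cards2; case: (q1 != q2).
have /eqP Ni : [set j | g i j] == [set q1; q2] by rewrite eqEcard sub2 card2.
have : q1 \in [set j | g i j] by rewrite Ni !inE eqxx.
have : q2 \in [set j | g i j] by rewrite Ni !inE eqxx orbT.
by rewrite !inE => -> ->.
Qed.

(* [a] is the edge joining [i] and [k], and [s = +-1] records its orientation. *)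
Lemma adj_edge i k : g i k -> exists a : edge g, exists2 s : F, s != 0 &
  forall c h, brcoef a c h = if c == k then s * h i else if c == i then - s * h k else 0.
Proof.
move=> gik; have ik : i != k by apply: contraTneq gik => ->; rewrite g_irr.
have rhsE (s : F) c (h : 'I_n -> F) : ((i == c)%:R * h k - (k == c)%:R * h i) * - s =
    if c == k then s * h i else if c == i then - s * h k else 0.
  have [->|_] := eqVneq c k; first by rewrite (negbTE ik) /=; ring.
  by have [_|_] := eqVneq c i; rewrite /=; ring.
case: (ltngtP i k) => [lt|lt|/val_inj ik']; last by rewrite ik' eqxx in ik.
- have [a Ea] := exists_edge lt gik.
  exists a, (-1); first by rewrite oppr_eq0 oner_eq0.
  by move=> c h; rewrite -rhsE /brcoef Ea /=; ring.
- have [a Ea] := exists_edge lt (eq_trans (g_sym k i) gik).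
  exists a, 1; first by rewrite oner_eq0.
  by move=> c h; rewrite -rhsE /brcoef Ea /=; ring.
Qed.

Lemma brN_inl (x y : Nv F g) i : brN x y (inl i) = 0.
Proof. by rewrite ffunE. Qed.

Lemma brN_inr (x y : Nv F g) a : brN x y (inr a) =
  x (inl (val a).1) * y (inl (val a).2) - x (inl (val a).2) * y (inl (val a).1).
Proof. by rewrite ffunE. Qed.

Lemma brN_evl k (y : Nv F g) a :
  brN (ev F (inl k)) y (inr a) = brcoef a k (fun m => y (inl m)).
Proof. by rewrite brN_inr !evE. Qed.

Lemma sum_brN (x : Nv F g) (Z : basis g -> F) p :
  \sum_r brN x (ev F r) p * Z r = brN x [ffun r => Z r] p.
Proof.
case: p => [i|a]; first by rewrite brN_inl big1 // => r _; rewrite brN_inl mul0r.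
transitivity (\sum_r (x (inl (val a).1) * ((inl (val a).2 == r)%:R * Z r)
                    - x (inl (val a).2) * ((inl (val a).1 == r)%:R * Z r))).
  by apply: eq_bigr => r _; rewrite brN_inr !evE /=; ring.
by rewrite sumrB -!mulr_sumr !sum_kronecker_mull brN_inr !ffunE.
Qed.

Lemma ad2E (x : Nv F g) (X : ten2 F (basis g)) p q :
  ad2 (@brN F n g) x X (p, q) =
  brN x [ffun r => X (r, q)] p + brN x [ffun r => X (p, r)] q.
Proof. by rewrite ffunE /= big_split /= -!sum_brN. Qed.

Lemma ad2_evlE k (X : ten2 F (basis g)) a b :
  ad2 (@brN F n g) (ev F (inl k)) X (inr a, inr b) =
  brcoef a k (fun m => X (inl m, inr b)) + brcoef b k (fun m => X (inr a, inl m)).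
Proof. by rewrite ad2E !brN_evl; congr (_ + _); apply: eq_brcoef => m; rewrite ffunE. Qed.

Lemma brN_eq0 (x Z : Nv F g) p : (forall i, Z (inl i) = 0) -> brN x Z p = 0.
Proof.
by move=> Z0; case: p => [i|a]; rewrite ?brN_inl // brN_inr !Z0 !mulr0 subrr.
Qed.

Lemma inW_lin : linear (inW g : Wv F n -> Nv F g).
Proof. by move=> k u v; apply/ffunP => [[i|a]]; rewrite !ffunE //= [_ *: _]mulr0 addr0. Qed.

Lemma inZ_lin : linear (@inZ F n g).
Proof. by move=> k u v; apply/ffunP => [[i|a]]; rewrite !ffunE //= [_ *: _]mulr0 addr0. Qed.

Lemma inW_ev k : inW g (ev F k) = ev F (inl k).
Proof. by apply/ffunP => [[i|a]]; rewrite !ffunE. Qed.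

Lemma inZ_ev a : inZ (ev F a) = ev F (inr a) :> Nv F g.
Proof. by apply/ffunP => [[i|b]]; rewrite !ffunE. Qed.

Lemma brN_inZ (z : Zv F g) (y : Nv F g) : brN (inZ z) y = 0.
Proof. by apply/ffunP => [[i|a]]; rewrite !ffunE //= !mul0r subrr. Qed.

Lemma ad2_inZ (z : Zv F g) (X : ten2 F (basis g)) : ad2 (@brN F n g) (inZ z) X = 0.
Proof. by apply/ffunP => [[p q]]; rewrite ad2E !brN_inZ !ffunE addr0. Qed.

Lemma brN_inW (x y : Wv F n) : brN (inW g x) (inW g y) = inZ (brW g x y).
Proof. by apply/ffunP => [[i|a]]; rewrite !ffunE. Qed.

Lemma brN_inZE (x y : Nv F g) : brN x y = inZ [ffun a => brN x y (inr a)].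
Proof. by apply/ffunP => [[i|a]]; rewrite !ffunE. Qed.

(** * TST type *)

Lemma TmxE (a : edge g) i j :
  Tmx F a i j = brcoef a i (fun m => (m == j)%:R).
Proof. by rewrite mxE ffunE !evE. Qed.

Lemma mulTmx (a : edge g) (M : 'M[F]_n) i j :
  (Tmx F a *m M) i j = brcoef a i (fun m => M m j).
Proof.
rewrite mxE; under eq_bigr do rewrite TmxE /brcoef mulrBl -!mulrA.
by rewrite sumrB -!mulr_sumr !sum_kronecker_mull.
Qed.

Lemma mulmxT (a : edge g) (M : 'M[F]_n) i j :
  (M *m Tmx F a) i j = - brcoef a j (fun m => M i m).
Proof.
rewrite mxE; under eq_bigr do rewrite TmxE /brcoef mulrBr !mulrA.
by rewrite sumrB -!mulr_suml !sum_kronecker_mulr /brcoef; ring.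
Qed.

Lemma mulmx_TmxE (a b : edge g) (S : 'M[F]_n) i j :
  (Tmx F a *m S *m Tmx F b) i j = - brcoef b j (fun y => brcoef a i (fun x => S x y)).
Proof. by rewrite mulmxT; congr (- _); apply: eq_brcoef => y; rewrite mulTmx. Qed.

(* With neighbours [p' <> q] of [p] and [q' <> p'] of [q], only [T_a S T_b]
   contributes to the [(p', q')] entry, where [a = {p, p'}] and [b = {q, q'}]. *)
Lemma TST_type_graph : TST_type F g.
Proof.
move=> S TST; apply/matrixP => p q; rewrite mxE.
have [p' gpp' p'q] := neighbor_neq p q.
have [q' gqq' q'p'] := neighbor_neq q p'.
have [a [sa sa0 Ha]] := adj_edge gpp'.
have [b [sb sb0 Hb]] := adj_edge gqq'.
have T1 : (Tmx F a *m S *m Tmx F b) p' q' = - (sb * (sa * S p q)).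
  by rewrite mulmx_TmxE Hb eqxx /= Ha eqxx.
have T2 : (Tmx F b *m S *m Tmx F a) p' q' = 0.
  rewrite mulmx_TmxE (@eq_brcoef _ _ _ (fun _ => 0)); last first.
    by move=> y; rewrite Hb eq_sym (negbTE q'p') (negbTE p'q).
  by rewrite /brcoef !mulr0 subrr oppr0.
have /matrixP/(_ p' q') := TST a b.
rewrite [LHS]mxE T1 T2 addr0 mxE => /eqP.
by rewrite oppr_eq0 !mulf_eq0 (negbTE sa0) (negbTE sb0) => /eqP.
Qed.

(** * Invariants of the adjoint action on the exterior square *)

Section GeneratorInvariant.
Variable X : ten2 F (basis g).
Hypothesis X_anti : antisym2 X.
Hypothesis X_inv : forall k, ad2 (@brN F n g) (ev F (inl k)) X = 0.

Let X_invE k p q : ad2 (@brN F n g) (ev F (inl k)) X (p, q) = 0.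
Proof. by rewrite X_inv ffun0E. Qed.

Lemma invariant_WW i j : X (inl i, inl j) = 0.
Proof.
have [k gik _] := neighbor_neq i i.
have [a [s s0 Ha]] := adj_edge gik.
have := X_invE k (inr a) (inl j).
rewrite ad2E brN_inl addr0 brN_evl Ha eqxx ffunE => /eqP.
by rewrite mulf_eq0 (negbTE s0) => /eqP.
Qed.

(* On a triangle u < v < w the three invariance relations read
   B = C, A = - C and A = B, whence 2 B = 0. *)
Lemma invariant_triangle (a b c : edge g) :
  (val a).1 = (val b).1 -> (val a).2 = (val c).1 -> (val b).2 = (val c).2 ->
  [/\ X (inl (val a).1, inr c) = 0, X (inl (val a).2, inr b) = 0
    & X (inl (val b).2, inr a) = 0].
Proof.
move=> ab1 ac bc.
set A := X (inl (val a).1, inr c).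
set B := X (inl (val a).2, inr b).
set C := X (inl (val b).2, inr a).
have E1 : B + - C = 0.
  by have := X_invE (val a).1 (inr a) (inr b);
    rewrite ad2_evlE brcoef_fst ab1 brcoef_fst (X_anti (inr a)).
have E2 : - A + - C = 0.
  by have := X_invE (val a).2 (inr a) (inr c);
    rewrite ad2_evlE brcoef_snd ac brcoef_fst (X_anti (inr a)) -bc.
have E3 : - A + - - B = 0.
  by have := X_invE (val b).2 (inr b) (inr c);
    rewrite ad2_evlE brcoef_snd bc brcoef_snd (X_anti (inr b)) -ac -ab1.
have B0 : B = 0.
  have twoB : B + B = (B + - C) + (- A + - - B) - (- A + - C) by ring.
  rewrite E1 E2 E3 !addr0 subrr in twoB.
  by apply: (eqrN_pchar0 charF0); apply/eqP; rewrite -addr_eq0 twoB.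
split=> //.
- by move: E3; rewrite B0 !oppr0 addr0 => /eqP; rewrite oppr_eq0 => /eqP.
- by move: E1; rewrite B0 add0r => /eqP; rewrite oppr_eq0 => /eqP.
Qed.

(* Either a neighbour [k] of [i] avoids both ends of [b], and then [ad e_k]
   isolates [X (e_i, b)], or [i] and [b] span a triangle. *)
Lemma invariant_Wz i (b : edge g) : X (inl i, inr b) = 0.
Proof.
case: (neighbor_neq2 i (val b).1 (val b).2) => [[k gik /andP [kb1 kb2]]|[gi1 gi2]].
  have [a [s s0 Ha]] := adj_edge gik.
  have := X_invE k (inr a) (inr b).
  rewrite ad2_evlE Ha eqxx brcoef0 // addr0 => /eqP.
  by rewrite mulf_eq0 (negbTE s0) => /eqP.
have b12 := edge_lt b.
case: (ltngtP i (val b).1) => [i1|i1|/val_inj i1]; last by rewrite i1 g_irr in gi1.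
- have [a Ea] := exists_edge i1 gi1.
  have [b' Eb'] := exists_edge (ltn_trans i1 b12) gi2.
  have := @invariant_triangle a b' b; rewrite Ea Eb' /=.
  by case/(_ erefl erefl erefl).
case: (ltngtP i (val b).2) => [i2|i2|/val_inj i2]; last by rewrite i2 g_irr in gi2.
- have [a Ea] := exists_edge i1 (eq_trans (g_sym _ _) gi1).
  have [c Ec] := exists_edge i2 gi2.
  have := @invariant_triangle a b c; rewrite Ea Ec /=.
  by case/(_ erefl erefl erefl).
- have [b' Eb'] := exists_edge (ltn_trans b12 i2) (eq_trans (g_sym _ _) gi1).
  have [c Ec] := exists_edge i2 (eq_trans (g_sym _ _) gi2).
  have := @invariant_triangle b b' c; rewrite Eb' Ec /=.
  by case/(_ erefl erefl erefl).
Qed.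

Lemma generator_invariant_inZ2 : X = inZ2 [ffun ab => X (inr ab.1, inr ab.2)].
Proof.
apply/ffunP => [[[i|a] [j|b]]]; rewrite !ffunE //=.
- exact: invariant_WW.
- exact: invariant_Wz.
- by rewrite X_anti invariant_Wz oppr0.
Qed.

End GeneratorInvariant.

Lemma ad2_inZ2 (Y : ten2 F (edge g)) (x : Nv F g) : ad2 (@brN F n g) x (inZ2 Y) = 0.
Proof.
apply/ffunP => [[p q]]; rewrite ad2E ffun0E.
by case: p => [i|a]; rewrite !brN_eq0 ?addr0 // => j; rewrite !ffunE.
Qed.

Lemma invariantsP (X : ten2 F (basis g)) : antisym2 X ->
  (forall x : Nv F g, ad2 (@brN F n g) x X = 0) <->
  (exists Y : ten2 F (edge g), antisym2 Y /\ X = inZ2 Y).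
Proof.
move=> X_anti; split=> [X_inv|[Y [_ ->]] x]; last exact: ad2_inZ2.
exists [ffun ab => X (inr ab.1, inr ab.2)]; split.
  by move=> a b; rewrite !ffunE X_anti.
exact: generator_invariant_inZ2.
Qed.

(** * Lie bialgebra cobrackets *)

Section Cobracket.
Variable delta : Nv F g -> ten2 F (basis g).
Hypothesis delta_cob : is_cobracket (@brN F n g) delta.

Let delta_lin : linear delta. Proof. by case: delta_cob. Qed.
Let delta_anti x : antisym2 (delta x). Proof. by case: delta_cob. Qed.
Let delta_coJacobi : coJacobi delta. Proof. by case: delta_cob. Qed.
Let delta_cocycle x y :
  delta (brN x y) = ad2 (@brN F n g) x (delta y) - ad2 (@brN F n g) y (delta x).
Proof. by case: delta_cob. Qed.

Let delta0 : delta 0 = 0. Proof. exact: linear0 (linearOf delta_lin). Qed.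

Definition delta_z (z : Zv F g) : ten2 F (edge g) :=
  [ffun ab => delta (inZ z) (inr ab.1, inr ab.2)].
Definition delta_D (a : edge g) (v : Wv F n) : Wv F n :=
  [ffun w => delta (inW g v) (inl w, inr a)].
Definition delta_phi (v : Wv F n) : ten2 F (edge g) :=
  [ffun ab => delta (inW g v) (inr ab.1, inr ab.2)].

Lemma delta_inZ_invariant (z : Zv F g) (y : Nv F g) : ad2 (@brN F n g) y (delta (inZ z)) = 0.
Proof.
have := delta_cocycle (inZ z) y.
rewrite brN_inZ delta0 ad2_inZ sub0r => /esym/eqP.
by rewrite oppr_eq0 => /eqP.
Qed.

Lemma delta_inZE z : delta (inZ z) = inZ2 (delta_z z).
Proof.
have [Y [_ EY]] := (invariantsP (delta_anti (inZ z))).1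
  (delta_inZ_invariant z).
apply/ffunP => [[p q]]; rewrite [in LHS]EY !ffunE.
by case: p => [i|a]; case: q => [j|b] //=; rewrite /delta_z ffunE EY ffunE.
Qed.

Lemma delta_inZ_eq0 z p q : ~~ (isE p && isE q) -> delta (inZ z) (p, q) = 0.
Proof. by rewrite delta_inZE ffunE; case: p => [i|a]; case: q => [j|b]. Qed.

Lemma delta_evr e p q : delta (ev F (inr e)) (p, q) = inZ2 (delta_z (ev F e)) (p, q).
Proof. by rewrite -inZ_ev delta_inZE. Qed.

Lemma delta_zE z a b : delta (inZ z) (inr a, inr b) = delta_z z (a, b).
Proof. by rewrite ffunE. Qed.

(* With [c] the edge between [m] and a neighbour [k != l] of [m], the
   [(e_i, c)]-coordinate of the cocycle identity for [[e_k, e_l]] is a nonzero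
   multiple of [delta e_l (e_i, e_m)], while [[e_k, e_l]] is central. *)
Lemma delta_evl_WW l i m : delta (ev F (inl l)) (inl i, inl m) = 0.
Proof.
have off_diag i' m' : m' != l -> delta (ev F (inl l)) (inl i', inl m') = 0.
  move=> ml; have [k gmk kl] := neighbor_neq m' l.
  have [c [s s0 Hc]] := adj_edge gmk.
  have := congr1 (fun X : ten2 F (basis g) => X (inl i', inr c))
    (delta_cocycle (ev F (inl k)) (ev F (inl l))).
  rewrite /= ffunBE !ad2E !brN_inl !add0r !brN_evl brN_inZE delta_inZ_eq0 // !Hc eqxx.
  rewrite (eq_sym l k) (negbTE kl) (eq_sym l m') (negbTE ml) /= !ffunE subr0 => /esym/eqP.
  by rewrite mulf_eq0 (negbTE s0) => /eqP.
have [->|ml] := eqVneq m l; last exact: off_diag.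
have [->|il] := eqVneq i l; last by rewrite delta_anti off_diag ?oppr0.
exact: (eqrN_pchar0 charF0 (delta_anti _ _ _)).
Qed.

Lemma delta_inW_lin : linear (fun v => delta (inW g v)).
Proof. by move=> k u v /=; rewrite inW_lin delta_lin. Qed.

Lemma delta_inW_WW v i j : delta (inW g v) (inl i, inl j) = 0.
Proof.
rewrite (linear_coordE _ _ delta_inW_lin) big1 // => k _.
by rewrite /= inW_ev delta_evl_WW mulr0.
Qed.

Lemma delta_z_lin : linear delta_z.
Proof. by move=> k u v; apply/ffunP => p; rewrite !ffunE inZ_lin delta_lin ffunDE ffunZE. Qed.

Lemma delta_D_lin a : linear (delta_D a).
Proof. by move=> k u v; apply/ffunP => p; rewrite !ffunE inW_lin delta_lin ffunDE ffunZE. Qed.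

Lemma delta_phi_lin : linear delta_phi.
Proof. by move=> k u v; apply/ffunP => p; rewrite !ffunE inW_lin delta_lin ffunDE ffunZE. Qed.

Lemma delta_z_anti z : antisym2 (delta_z z).
Proof. by move=> a b; rewrite !ffunE delta_anti. Qed.

Lemma delta_phi_anti v : antisym2 (delta_phi v).
Proof. by move=> a b; rewrite !ffunE delta_anti. Qed.

Lemma delta_inW_Wz v i a : delta (inW g v) (inl i, inr a) = delta_D a v i.
Proof. by rewrite ffunE. Qed.

Lemma delta_inW_zW v a i : delta (inW g v) (inr a, inl i) = - delta_D a v i.
Proof. by rewrite delta_anti ffunE. Qed.

Lemma delta_inWE v : delta (inW g v) =
  \sum_(a : edge g) wedge (inW g (delta_D a v)) (inZ (ev F a)) + inZ2 (delta_phi v).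
Proof.
apply/ffunP => [[p q]]; rewrite ffunDE sum_ffunE.
case: p => [i|a]; case: q => [j|b]; rewrite !ffunE /=.
- by rewrite delta_inW_WW big1 ?addr0 // => a _; rewrite !ffunE /= !mulr0 subrr.
- rewrite addr0 (eq_bigr (fun a => delta_D a v i * (b == a)%:R)) ?sum_kronecker_mulr.
    by rewrite ffunE.
  by move=> a _; rewrite !ffunE /= !ffunE mul0r subr0.
- rewrite addr0 (eq_bigr (fun a' => - (delta_D a' v j * (a == a')%:R))).
    by rewrite sumrN sum_kronecker_mulr delta_inW_zW.
  by move=> a' _; rewrite !ffunE /= !ffunE mul0r sub0r.
- by rewrite big1 ?add0r // => a' _; rewrite !ffunE /= !mul0r subrr.
Qed.

Lemma delta_coJacobiE x p q r :
  \sum_(i < n) (delta x (inl i, p) * delta (ev F (inl i)) (q, r)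
              + delta x (inl i, q) * delta (ev F (inl i)) (r, p)
              + delta x (inl i, r) * delta (ev F (inl i)) (p, q))
  + \sum_(e : edge g) (delta x (inr e, p) * delta (ev F (inr e)) (q, r)
              + delta x (inr e, q) * delta (ev F (inr e)) (r, p)
              + delta x (inr e, r) * delta (ev F (inr e)) (p, q)) = 0.
Proof.
have := congr1 (fun T : ten3 F (basis g) => T (p, q, r)) (delta_coJacobi x).
by rewrite /= ffun0E (cojacE charF0 _ (delta_anti _)) big_sumType.
Qed.

Lemma coJacobi_delta_z : coJacobi delta_z.
Proof.
move=> z; apply/ffunP => [[[a b] c]]; rewrite ffun0E (cojacE charF0 _ (delta_z_anti z)).
apply: etrans (delta_coJacobiE (inZ z) (inr a) (inr b) (inr c)).
rewrite [X in _ = X + _]big1 ?add0r => [|i _]; last first.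
  by rewrite !delta_inZ_eq0 // !mul0r !addr0.
by apply: eq_bigr => e _; rewrite !delta_evr !delta_zE !ffunE.
Qed.

Lemma delta_D_comm a b v :
  delta_D a (delta_D b v) - delta_D b (delta_D a v) =
  \sum_c delta_z (ev F c) (a, b) *: delta_D c v.
Proof.
apply/ffunP => w; rewrite ffunBE sum_ffunE; under eq_bigr do rewrite ffunZE.
have W_part : \sum_(i < n)
     (delta (inW g v) (inl i, inl w) * delta (ev F (inl i)) (inr a, inr b)
    + delta (inW g v) (inl i, inr a) * delta (ev F (inl i)) (inr b, inl w)
    + delta (inW g v) (inl i, inr b) * delta (ev F (inl i)) (inl w, inr a))
  = \sum_i delta_D b v i * delta_D a (ev F i) w
    - \sum_i delta_D a v i * delta_D b (ev F i) w.
  rewrite -sumrB; apply: eq_bigr => i _.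
  by rewrite delta_inW_WW -inW_ev !delta_inW_Wz delta_inW_zW; ring.
have z_part : \sum_(e : edge g)
     (delta (inW g v) (inr e, inl w) * delta (ev F (inr e)) (inr a, inr b)
    + delta (inW g v) (inr e, inr a) * delta (ev F (inr e)) (inr b, inl w)
    + delta (inW g v) (inr e, inr b) * delta (ev F (inr e)) (inl w, inr a))
  = - \sum_e delta_z (ev F e) (a, b) * delta_D e v w.
  rewrite -sumrN; apply: eq_bigr => e _.
  by rewrite delta_inW_zW !delta_evr [inZ2 _ (inr a, inr b)]ffunE !ffunE /=; ring.
move: (delta_coJacobiE (inW g v) (inl w) (inr a) (inr b)).
rewrite W_part z_part => /eqP; rewrite subr_eq0 => /eqP <-.
by rewrite !(linear_coordE _ _ (delta_D_lin _)).
Qed.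

Lemma delta_z_cocycle (x y : Wv F n) :
  \sum_c brW g x y c *: delta_z (ev F c) =
  \sum_c \sum_e (brW g (delta_D e x) y c + brW g x (delta_D e y) c)
                 *: wedge (ev F c) (ev F e).
Proof.
apply/ffunP => [[a b]]; rewrite !sum_ffunE.
under [RHS]eq_bigr do rewrite sum_ffunE.
rewrite sum_wedge_evE; under eq_bigr do rewrite ffunZE.
rewrite -(linear_coordE _ _ delta_z_lin) -delta_zE -brN_inW delta_cocycle ffunBE.
rewrite !ad2E !brN_inr !ffunE /= !delta_inW_zW /delta_D !ffunE /=; ring.
Qed.

Lemma delta_phi_coJacobi v :
  \sum_c wedge21 (delta_phi (delta_D c v)) (ev F c)
  + \sum_a \sum_(b | bord a b) delta_phi v (a, b) *:
      (wedge21 (delta_z (ev F a)) (ev F b) - wedge12 (ev F a) (delta_z (ev F b))) = 0.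
Proof.
apply/ffunP => [[[a b] c]]; rewrite ffunDE ffun0E -/(cojac delta_z (delta_phi v)).
rewrite (cojacE charF0 _ (delta_phi_anti v)) sum_ffunE.
under eq_bigr do rewrite wedge21E !evE.
rewrite !big_split /= !sum_kronecker_mulr.
have W_part : \sum_(i < n)
     (delta (inW g v) (inl i, inr a) * delta (ev F (inl i)) (inr b, inr c)
    + delta (inW g v) (inl i, inr b) * delta (ev F (inl i)) (inr c, inr a)
    + delta (inW g v) (inl i, inr c) * delta (ev F (inl i)) (inr a, inr b))
  = delta_phi (delta_D a v) (b, c) + delta_phi (delta_D b v) (c, a)
    + delta_phi (delta_D c v) (a, b).
  rewrite (linear_coordE (delta_D a v) (b, c) delta_phi_lin).
  rewrite (linear_coordE (delta_D b v) (c, a) delta_phi_lin).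
  rewrite (linear_coordE (delta_D c v) (a, b) delta_phi_lin) -!big_split.
  by apply: eq_bigr => i _; rewrite -inW_ev !delta_inW_Wz /delta_phi !ffunE.
have z_part : \sum_(e : edge g)
     (delta (inW g v) (inr e, inr a) * delta (ev F (inr e)) (inr b, inr c)
    + delta (inW g v) (inr e, inr b) * delta (ev F (inr e)) (inr c, inr a)
    + delta (inW g v) (inr e, inr c) * delta (ev F (inr e)) (inr a, inr b))
  = \sum_e (delta_phi v (e, a) * delta_z (ev F e) (b, c)
           + delta_phi v (e, b) * delta_z (ev F e) (c, a)
           + delta_phi v (e, c) * delta_z (ev F e) (a, b)).
  by apply: eq_bigr => e _; rewrite !delta_evr /delta_phi !ffunE.
have := delta_coJacobiE (inW g v) (inr a) (inr b) (inr c).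
rewrite W_part z_part => E; apply: etrans E.
by congr (_ + _); [ring | rewrite !big_split].
Qed.

End Cobracket.
End Graph.

Theorem mainTheorem12
  (F : fieldType) (charF0 : [pchar F] =i pred0)
  (n : nat) (g : rel 'I_n)
  (g_sym : symmetric g) (g_irr : irreflexive g)
  (g_deg : forall i : 'I_n, (2 <= #|[set j | g i j]|)%N) :
  (* (Lambda^2 n)^n = Lambda^2 z *)
  (forall X : ten2 F (basis g), antisym2 X ->
     ((forall x : Nv F g, ad2 (@brN F n g) x X = 0) <->
      (exists Y : ten2 F (edge g), antisym2 Y /\ X = inZ2 Y)))
  (* n is of TST type *)
  /\ TST_type F g
  (* structure of Lie bialgebra cobrackets *)
  /\ (forall delta : Nv F g -> ten2 F (basis g),
       is_cobracket (@brN F n g) delta ->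
       (* delta(z) in Lambda^2 z *)
       (forall (z : Zv F g) (p q : basis g),
          ~~ (isE p && isE q) ->
          delta (inZ z) (p, q) = 0)
       (* delta(W) in (W /\ z) + Lambda^2 z *)
    /\ (forall (v : Wv F n) (i j : 'I_n), delta (inW g v) (inl i, inl j) = 0)
    /\ exists (dz : Zv F g -> ten2 F (edge g))
              (D : edge g -> Wv F n -> Wv F n)
              (phi : Wv F n -> ten2 F (edge g)),
         [/\ linear dz, (forall a, linear (D a)), linear phi,
             (forall z, antisym2 (dz z)) & (forall v, antisym2 (phi v))] /\
         [/\ (* delta(z) = delta_z(z) *)
             (forall z, delta (inZ z) = inZ2 (dz z)),
             (* delta(v) = sum_a D^a(v) /\ a + phi(v) *)
             (forall v, delta (inW g v) =
                \sum_(a : edge g) wedge (inW g (D a v)) (inZ (ev F a)) + inZ2 (phi v)),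
             (* delta_z satisfies co-Jacobi *)
             coJacobi dz &
             (* [D^a, D^b] = sum_c c_c^{ab} D^c  for a < b *)
             (forall (a b : edge g), bord a b -> forall v,
                D a (D b v) - D b (D a v) =
                \sum_(c : edge g) dz (ev F c) (a, b) *: D c v)] /\
         [/\
             (* sum_c T_c(x)(y) delta_z(c) = sum_{c,e} (T_c(D^e x)(y) + T_c(x)(D^e y)) c /\ e *)
             (forall x y : Wv F n,
                \sum_(c : edge g) brW g x y c *: dz (ev F c) =
                \sum_(c : edge g) \sum_(e : edge g)
                   (brW g (D e x) y c + brW g x (D e y) c) *: wedge (ev F c) (ev F e)) &
             (* sum_c phi(D^c v) /\ c + sum_{a<b} phi_ab(v) (dz(a) /\ b - a /\ dz(b)) = 0 *)
             (forall v : Wv F n,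
                \sum_(c : edge g) wedge21 (phi (D c v)) (ev F c)
                + \sum_(a : edge g) \sum_(b : edge g | bord a b)
                    phi v (a, b) *: (wedge21 (dz (ev F a)) (ev F b)
                                     - wedge12 (ev F a) (dz (ev F b))) = 0)]).
Proof.
split; first by apply: invariantsP.
split; first exact: TST_type_graph.
move=> delta delta_cob.
split; first by apply: delta_inZ_eq0.
split; first by apply: delta_inW_WW.
exists (delta_z delta), (delta_D delta), (delta_phi delta).
split; first by split; [apply: delta_z_lin | move=> a; apply: delta_D_lin
                      | apply: delta_phi_lin | apply: delta_z_anti | apply: delta_phi_anti].
split; first by split; [apply: delta_inZE | apply: delta_inWE
                      | apply: coJacobi_delta_z | move=> a b _ v; apply: delta_D_comm].
by split; [apply: delta_z_cocycle | apply: delta_phi_coJacobi].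
Qed.
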